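(* For every $\varepsilon>0$ there exists a setting with two items and two unit-demand agents whose valuations satisfy single-crossing, such that every (randomized) ex-post IC mechanism has, at some signal profile, expected welfare at most $\big(\frac{2+\sqrt2}{4}+\varepsilon\big)$ times the optimal welfare.
   Context: Two agents, items $a,b$; each agent has a scalar signal in $\{0,1\}$; values $v_{ij}(\mathbf{s})\ge0$ for item $j$ are public functions of the profile; unit demand means the value for a bundle $T$ is $\max_{j\in T}v_{ij}(\mathbf{s})$. Single-crossing: for every agent $i$, $\mathbf{s}_{-i}$, item $j$, agent $\ell$, and $s_i<s_i'$, $v_{ij}(s_i',\mathbf{s}_{-i})-v_{ij}(s_i,\mathbf{s}_{-i})\ge v_{\ell j}(s_i',\mathbf{s}_{-i})-v_{\ell j}(s_i,\mathbf{s}_{-i})$. A randomized mechanism assigns probabilities $x_{iT}(\mathbf{s})$ to feasible allocations and expected payments; ex-post IC means truthful reporting maximizes expected utility (expected true value minus expected payment) at every true profile when others report truthfully. *)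

From Stdlib Require Import Reals List.
Import ListNotations.
Open Scope R_scope.

Inductive agent := Ag1 | Ag2.
Inductive item := ItA | ItB.

Definition agent_eqb (i j : agent) : bool :=
  match i, j with Ag1, Ag1 | Ag2, Ag2 => true | _, _ => false end.

(** A signal profile: each agent's signal in {0,1} (false = 0, true = 1). *)
Definition profile := agent -> bool.

Definition upd (s : profile) (i : agent) (b : bool) : profile :=
  fun j => if agent_eqb j i then b else s j.

Definition valuation := agent -> item -> profile -> R.

(** A bundle T ⊆ {a,b}: (a ∈ T, b ∈ T). *)
Definition bundle := (bool * bool)%type.
Definition all_bundles : list bundle :=
  [(false,false); (true,false); (false,true); (true,true)].

Definition alloc := (bundle * bundle)%type.
Definition all_allocs : list alloc := list_prod all_bundles all_bundles.

Definition feasible (A : alloc) : bool :=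
  negb (fst (fst A) && fst (snd A)) && negb (snd (fst A) && snd (snd A)).

Definition bundle_of (i : agent) (A : alloc) : bundle :=
  match i with Ag1 => fst A | Ag2 => snd A end.

(** Unit demand: value of T is max_{j in T} v_{ij}(s) (0 for the empty bundle;
    values are nonnegative). *)
Definition bval (v : valuation) (i : agent) (T : bundle) (s : profile) : R :=
  Rmax (if fst T then v i ItA s else 0) (if snd T then v i ItB s else 0).

Definition lsum {X} (f : X -> R) (l : list X) : R :=
  fold_right (fun a acc => f a + acc) 0 l.

Definition nonneg_vals (v : valuation) : Prop :=
  forall i j s, 0 <= v i j s.

(** Single crossing (signals binary, so s_i < s_i' means false < true). *)
Definition single_crossing (v : valuation) : Prop :=
  forall (i : agent) (s : profile) (j : item) (l : agent),
    v i j (upd s i true) - v i j (upd s i false)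
    >= v l j (upd s i true) - v l j (upd s i false).

(** A randomized mechanism: x r A = probability of allocation A at reported
    profile r; p i r = expected payment of agent i at reported profile r. *)
Definition alloc_rule := profile -> alloc -> R.
Definition pay_rule := agent -> profile -> R.

Definition valid_alloc_rule (x : alloc_rule) : Prop :=
  (forall r A, 0 <= x r A) /\
  (forall r A, feasible A = false -> x r A = 0) /\
  (forall r, lsum (x r) all_allocs = 1).

Definition exp_util (v : valuation) (x : alloc_rule) (p : pay_rule)
  (i : agent) (s r : profile) : R :=
  lsum (fun A => x r A * bval v i (bundle_of i A) s) all_allocs - p i r.

Definition expost_IC (v : valuation) (x : alloc_rule) (p : pay_rule) : Prop :=
  forall (i : agent) (s : profile) (b : bool),
    exp_util v x p i s s >= exp_util v x p i s (upd s i b).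

Definition welfare (v : valuation) (A : alloc) (s : profile) : R :=
  bval v Ag1 (bundle_of Ag1 A) s + bval v Ag2 (bundle_of Ag2 A) s.

Definition exp_welfare (v : valuation) (x : alloc_rule) (s : profile) : R :=
  lsum (fun A => x s A * welfare v A s) all_allocs.

(** Optimal welfare: max over feasible allocations (the empty allocation is
    feasible with welfare 0, so starting the fold at 0 is harmless). *)
Definition opt_welfare (v : valuation) (s : profile) : R :=
  fold_right (fun A m => Rmax (welfare v A s) m) 0
    (filter feasible all_allocs).

(* Agent 2's signal is irrelevant;
   agent 1's signal s1 moves the efficient allocation:
     s1 = 0 :  v1 = (A:5, B:3),  v2 = (A:5, B:0),  optimum 8 = agent 1 gets B;
     s1 = 1 :  v1 = (A:5, B:4),  v2 = (A:0, B:1),  optimum 6 = agent 1 gets A.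
   Raising s1 increases agent 1's value for B alone by 1 and leaves every
   other bundle's value unchanged.

   Structure of the file.
   1. Linearity and monotonicity facts about the finite sums [lsum].
   2. Weak monotonicity, valid for every instance: adding the two ex-post IC
      constraints of agent i between s_i = 0 and s_i = 1 shows that the
      expected gain of agent i from raising its signal, under the lottery
      chosen at s_i = 1, is at least that under the lottery chosen at s_i = 0.
   3. Expected welfare is bounded by any affine function bounding the
      welfare of each feasible allocation.
   4. On the instance, writing q_L, q_H for the probability that agent 1 gets
      exactly {B} at s1 = 0, 1: monotonicity gives q_L <= q_H, while the
      welfares are at most 5 + 3 q_L (out of 8) and 6 - 2 q_H (out of 6).
      Hence one of the two ratios is at most 14/17, which is below
      (2 + sqrt 2)/4; this yields the theorem (with a margin, for every eps). *)

From Stdlib Require Import Reals Lra Psatz FunctionalExtensionality.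
Open Scope R_scope.

Lemma lsum_mult_minus {X} (f g h : X -> R) (l : list X) :
  lsum (fun a => f a * (g a - h a)) l =
  lsum (fun a => f a * g a) l - lsum (fun a => f a * h a) l.
Proof. induction l as [|a l IH]; simpl; [ring | rewrite IH; ring]. Qed.

Lemma lsum_affine {X} (f g : X -> R) (a b : R) (l : list X) :
  lsum (fun x => f x * (a + b * g x)) l =
  a * lsum f l + b * lsum (fun x => f x * g x) l.
Proof. induction l as [|y l IH]; simpl; [ring | rewrite IH; ring]. Qed.

Lemma lsum_le {X} (f g : X -> R) (l : list X) :
  (forall a, f a <= g a) -> lsum f l <= lsum g l.
Proof. intros Hfg; induction l as [|a l IH]; simpl; [lra | specialize (Hfg a); lra]. Qed.

Lemma upd_upd (s : profile) (i : agent) (b b' : bool) :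
  upd (upd s i b) i b' = upd s i b'.
Proof.
  apply functional_extensionality; intros j; unfold upd.
  destruct (agent_eqb j i); reflexivity.
Qed.

Definition gain (v : valuation) (i : agent) (s : profile) (A : alloc) : R :=
  bval v i (bundle_of i A) (upd s i true) - bval v i (bundle_of i A) (upd s i false).

(* Summing the IC constraint of the high type against misreporting low and
   that of the low type against misreporting high cancels the payments. *)
Lemma IC_weak_monotone (v : valuation) (x : alloc_rule) (p : pay_rule)
  (i : agent) (s : profile) :
  expost_IC v x p ->
  lsum (fun A => x (upd s i false) A * gain v i s A) all_allocs <=
  lsum (fun A => x (upd s i true) A * gain v i s A) all_allocs.
Proof.
  intros HIC.
  pose proof (HIC i (upd s i true) false) as high_no_lie.
  pose proof (HIC i (upd s i false) true) as low_no_lie.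
  rewrite !upd_upd in high_no_lie, low_no_lie.
  unfold exp_util in *; unfold gain; rewrite !lsum_mult_minus; lra.
Qed.

(* Only feasible allocations carry probability, so a pointwise bound on
   feasible allocations bounds the expectation. *)
Lemma exp_welfare_le_affine (v : valuation) (x : alloc_rule) (s : profile)
  (a b : R) (g : alloc -> R) :
  valid_alloc_rule x ->
  (forall A, feasible A = true -> welfare v A s <= a + b * g A) ->
  exp_welfare v x s <= a + b * lsum (fun A => x s A * g A) all_allocs.
Proof.
  intros [Hnn [Hinfeas Hsum]] Hbound.
  unfold exp_welfare.
  apply Rle_trans with (lsum (fun A => x s A * (a + b * g A)) all_allocs).
  - apply lsum_le; intros A.
    destruct (feasible A) eqn:HA.
    + apply Rmult_le_compat_l; auto.
    + rewrite (Hinfeas s A HA); lra.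
  - rewrite lsum_affine, Hsum; lra.
Qed.

Definition vex : valuation := fun i j s =>
  match i, j with
  | Ag1, ItA => 5
  | Ag1, ItB => if s Ag1 then 4 else 3
  | Ag2, ItA => if s Ag1 then 0 else 5
  | Ag2, ItB => if s Ag1 then 1 else 0
  end.

Definition gets_only_B (A : alloc) : R :=
  match bundle_of Ag1 A with (false, true) => 1 | _ => 0 end.

Ltac eval_Rmax :=
  repeat match goal with
  | |- context [Rmax ?a ?b] =>
      first [rewrite (Rmax_left a b) by lra | rewrite (Rmax_right a b) by lra]
  end.

Lemma vex_nonneg : nonneg_vals vex.
Proof. intros i j s; destruct i, j; simpl; destruct (s Ag1); lra. Qed.

Lemma vex_single_crossing : single_crossing vex.
Proof. intros i s j l; destruct i, j, l; cbn; destruct (s Ag1); lra. Qed.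

Lemma vex_gain (s : profile) : gain vex Ag1 s = gets_only_B.
Proof.
  apply functional_extensionality; intros [[[] []] T2];
    unfold gain, gets_only_B, bval; cbn; eval_Rmax; lra.
Qed.

Lemma vex_welfare_low (s : profile) (A : alloc) : feasible A = true ->
  welfare vex A (upd s Ag1 false) <= 5 + 3 * gets_only_B A.
Proof.
  destruct A as [[[] []] [[] []]]; intros HA; try discriminate HA;
    unfold welfare, gets_only_B, bval; cbn; eval_Rmax; lra.
Qed.

Lemma vex_welfare_high (s : profile) (A : alloc) : feasible A = true ->
  welfare vex A (upd s Ag1 true) <= 6 + -2 * gets_only_B A.
Proof.
  destruct A as [[[] []] [[] []]]; intros HA; try discriminate HA;
    unfold welfare, gets_only_B, bval; cbn; eval_Rmax; lra.
Qed.

Lemma vex_opt_low (s : profile) : opt_welfare vex (upd s Ag1 false) = 8.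
Proof. unfold opt_welfare, welfare, bval; cbn; eval_Rmax; lra. Qed.

Lemma vex_opt_high (s : profile) : opt_welfare vex (upd s Ag1 true) = 6.
Proof. unfold opt_welfare, welfare, bval; cbn; eval_Rmax; lra. Qed.

Lemma vex_ratio (x : alloc_rule) (p : pay_rule) :
  valid_alloc_rule x -> expost_IC vex x p ->
  exists s : profile,
    0 < opt_welfare vex s /\ exp_welfare vex x s <= 14 / 17 * opt_welfare vex s.
Proof.
  intros Hx HIC.
  set (s0 := fun _ : agent => false).
  set (qL := lsum (fun A => x (upd s0 Ag1 false) A * gets_only_B A) all_allocs).
  set (qH := lsum (fun A => x (upd s0 Ag1 true) A * gets_only_B A) all_allocs).
  assert (mono : qL <= qH).
  { pose proof (IC_weak_monotone vex x p Ag1 s0 HIC) as H.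
    rewrite vex_gain in H; exact H. }
  assert (WL := exp_welfare_le_affine vex x _ 5 3 _ Hx (vex_welfare_low s0)).
  assert (WH := exp_welfare_le_affine vex x _ 6 (-2) _ Hx (vex_welfare_high s0)).
  fold qL in WL; fold qH in WH.
  destruct (Rle_dec (exp_welfare vex x (upd s0 Ag1 false)) (14 / 17 * 8)).
  - exists (upd s0 Ag1 false); rewrite vex_opt_low; lra.
  - exists (upd s0 Ag1 true); rewrite vex_opt_high; lra.
Qed.

(* 14/17 lies below the target constant, since (22/17)^2 < 2. *)
Lemma ratio_below_target : 14 / 17 <= (2 + sqrt 2) / 4.
Proof.
  pose proof (sqrt_sqrt 2 ltac:(lra)); pose proof (sqrt_pos 2); nra.
Qed.

Theorem mainTheorem13 :
  forall eps : R, 0 < eps ->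
  exists v : valuation,
    nonneg_vals v /\ single_crossing v /\
    forall (x : alloc_rule) (p : pay_rule),
      valid_alloc_rule x -> expost_IC v x p ->
      exists s : profile,
        0 < opt_welfare v s /\
        exp_welfare v x s <= ((2 + sqrt 2) / 4 + eps) * opt_welfare v s.
Proof.
  intros eps Heps.
  exists vex; split; [exact vex_nonneg | split; [exact vex_single_crossing |]].
  intros x p Hx HIC.
  destruct (vex_ratio x p Hx HIC) as [s [Hopt Hle]].
  exists s; split; [exact Hopt |].
  pose proof ratio_below_target.
  apply Rle_trans with (14 / 17 * opt_welfare vex s); [exact Hle |].
  apply Rmult_le_compat_r; lra.
Qed.
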